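(* (a) QHC is a strongly conservative extension of classical predicate calculus QC: if $p_1,\dots,p_n\vdash_{\mathrm{QHC}} p$ where $p_1,\dots,p_n,p$ are propositions built from atomic propositions and $0$ using only classical connectives and quantifiers (no $!$, $?$), then $p_1,\dots,p_n\vdash_{\mathrm{QC}} p$. (b) QHC is a strongly conservative extension of QS4 via $\Box\mapsto ?!$: if $A_1,\dots,A_n, A$ are formulas of QS4 and the rule $A_1^*,\dots,A_n^*\,/\,A^*$ is derivable in QHC, where $B^*$ denotes the result of replacing every $\Box$ in $B$ by $?!$, then $A_1,\dots,A_n\vdash_{\mathrm{QS4}} A$.
   Context: QHC is a two-sorted first-order calculus. Its only terms are individual variables. Every formula is either a problem (denoted by Greek letters $\alpha,\beta,\gamma,\dots$) or a proposition (denoted by Latin letters $p,q,\dots$). Atomic formulas are proposition variables $p(t_1,\dots,t_n)$ (of proposition type), problem variables $\pi(t_1,\dots,t_n)$ (of problem type), and the constants $0$ (a proposition, classical falsity) and $\bot$ (a problem, intuitionistic absurdity). Propositions are closed under the classical connectives $\land,\lor,\to$ and quantifiers $\exists,\forall$; problems are closed under the intuitionistic connectives $\land,\lor,\to$ and quantifiers $\exists,\forall$ (the same symbols are used, distinguished by the type of the arguments). $\neg p$ abbreviates $p\to 0$, $\neg\alpha$ abbreviates $\alpha\to\bot$, and $\leftrightarrow$ is defined as usual. There are two type-conversion operators: if $p$ is a proposition then $!p$ is a problem, and if $\alpha$ is a problem then $?\alpha$ is a proposition. Deductive system of QHC: all axioms and rules of classical predicate logic applied to all propositions; all postulates and rules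 of intuitionistic predicate logic applied to all problems; the rules $p\,/\,!p$ and $\alpha\,/\,?\alpha$; and the schemas $?!p\to p$; $\alpha\to\, !?\alpha$; $!(p\to q)\to(!p\to !q)$; $?(\alpha\to\beta)\to(?\alpha\to ?\beta)$; $!0\to\bot$; $?(\alpha\land\beta)\leftrightarrow ?\alpha\land ?\beta$; $?(\alpha\lor\beta)\leftrightarrow ?\alpha\lor ?\beta$; $?\bot\to 0$; $?\exists x\,\alpha(x)\leftrightarrow\exists x\,?\alpha(x)$; $?\forall x\,\alpha(x)\to\forall x\,?\alpha(x)$ (usual variable side conditions implicit). $\vdash A$ means $A$ is derivable in QHC; $A\Rightarrow B$ means $\vdash A\to B$ and $A\Leftrightarrow B$ means $\vdash A\leftrightarrow B$ (with $A,B$ of the same type); $A\vdash B$ means $B$ is derivable in QHC from the premise $A$. Notation: $\Box p := ?!p$ (a proposition) and $\nabla\alpha := !?\alpha$ (a problem). QC and QH denote classical and intuitionistic predicate calculus. QS4 is classical predicate calculus (over the proposition variables of QHC) with a unary connective $\Box$, axiom schemes $\Box p\to p$, $\Box p\to\Box\Box p$, $\Box(p\to q)\to(\Box p\to\Box q)$ and rule $p\,/\,\Box p$. *)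

From Stdlib Require Import List.
Import ListNotations.

(* Individual variables are de Bruijn indices (nat); the only terms are variables,
   so every substitution is a renaming of variables. *)
Definition up (r : nat -> nat) : nat -> nat :=
  fun n => match n with 0 => 0 | S k => S (r k) end.
Definition inst (t : nat) : nat -> nat :=
  fun n => match n with 0 => t | S k => k end.

(* propositions (classical sort) and problems (intuitionistic sort) *)
Inductive prop : Type :=
| PVar   : nat -> list nat -> prop
| PFalse : prop
| PAnd   : prop -> prop -> prop
| POr    : prop -> prop -> prop
| PImp   : prop -> prop -> prop
| PEx    : prop -> prop
| PAll   : prop -> prop
| PQuest : prob -> prop
with prob : Type :=
| QVar   : nat -> list nat -> prob
| QBot   : prob
| QAnd   : prob -> prob -> prob
| QOr    : prob -> prob -> prob
| QImp   : prob -> prob -> prob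
| QEx    : prob -> prob
| QAll   : prob -> prob
| QBang  : prop -> prob.

Fixpoint renP (r : nat -> nat) (p : prop) : prop :=
  match p with
  | PVar i l => PVar i (map r l)
  | PFalse => PFalse
  | PAnd a b => PAnd (renP r a) (renP r b)
  | POr a b => POr (renP r a) (renP r b)
  | PImp a b => PImp (renP r a) (renP r b)
  | PEx a => PEx (renP (up r) a)
  | PAll a => PAll (renP (up r) a)
  | PQuest a => PQuest (renQ r a)
  end
with renQ (r : nat -> nat) (a : prob) : prob :=
  match a with
  | QVar i l => QVar i (map r l)
  | QBot => QBot
  | QAnd x y => QAnd (renQ r x) (renQ r y)
  | QOr x y => QOr (renQ r x) (renQ r y)
  | QImp x y => QImp (renQ r x) (renQ r y)
  | QEx x => QEx (renQ (up r) x)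
  | QAll x => QAll (renQ (up r) x)
  | QBang p => QBang (renP r p)
  end.

Definition PIff (a b : prop) : prop := PAnd (PImp a b) (PImp b a).

(* Derivability from a list G of premises (propositions); premises are leaves of
   derivations and all rules (including generalization, p/!p, alpha/?alpha) apply. *)
Inductive DerP (G : list prop) : prop -> Prop :=
| DP_hyp  : forall p, In p G -> DerP G p
| DP_K    : forall a b, DerP G (PImp a (PImp b a))
| DP_S    : forall a b c, DerP G (PImp (PImp a (PImp b c)) (PImp (PImp a b) (PImp a c)))
| DP_AndE1 : forall a b, DerP G (PImp (PAnd a b) a)
| DP_AndE2 : forall a b, DerP G (PImp (PAnd a b) b)
| DP_AndI : forall a b, DerP G (PImp a (PImp b (PAnd a b)))
| DP_OrI1 : forall a b, DerP G (PImp a (POr a b))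
| DP_OrI2 : forall a b, DerP G (PImp b (POr a b))
| DP_OrE  : forall a b c, DerP G (PImp (PImp a c) (PImp (PImp b c) (PImp (POr a b) c)))
| DP_EFQ  : forall a, DerP G (PImp PFalse a)
| DP_DNE  : forall a, DerP G (PImp (PImp (PImp a PFalse) PFalse) a)
| DP_AllE : forall a t, DerP G (PImp (PAll a) (renP (inst t) a))
| DP_ExI  : forall a t, DerP G (PImp (renP (inst t) a) (PEx a))
| DP_MP   : forall a b, DerP G (PImp a b) -> DerP G a -> DerP G b
| DP_Gen  : forall a b, DerP G (PImp (renP S b) a) -> DerP G (PImp b (PAll a))
| DP_ExR  : forall a b, DerP G (PImp a (renP S b)) -> DerP G (PImp (PEx a) b)
| DP_quest : forall a, DerQ G a -> DerP G (PQuest a)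
| DP_qb   : forall p, DerP G (PImp (PQuest (QBang p)) p)
| DP_qimp : forall a b, DerP G (PImp (PQuest (QImp a b)) (PImp (PQuest a) (PQuest b)))
| DP_qand : forall a b, DerP G (PIff (PQuest (QAnd a b)) (PAnd (PQuest a) (PQuest b)))
| DP_qor  : forall a b, DerP G (PIff (PQuest (QOr a b)) (POr (PQuest a) (PQuest b)))
| DP_qbot : DerP G (PImp (PQuest QBot) PFalse)
| DP_qex  : forall a, DerP G (PIff (PQuest (QEx a)) (PEx (PQuest a)))
| DP_qall : forall a, DerP G (PImp (PQuest (QAll a)) (PAll (PQuest a)))
with DerQ (G : list prop) : prob -> Prop :=
| DQ_K    : forall a b, DerQ G (QImp a (QImp b a))
| DQ_S    : forall a b c, DerQ G (QImp (QImp a (QImp b c)) (QImp (QImp a b) (QImp a c)))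
| DQ_AndE1 : forall a b, DerQ G (QImp (QAnd a b) a)
| DQ_AndE2 : forall a b, DerQ G (QImp (QAnd a b) b)
| DQ_AndI : forall a b, DerQ G (QImp a (QImp b (QAnd a b)))
| DQ_OrI1 : forall a b, DerQ G (QImp a (QOr a b))
| DQ_OrI2 : forall a b, DerQ G (QImp b (QOr a b))
| DQ_OrE  : forall a b c, DerQ G (QImp (QImp a c) (QImp (QImp b c) (QImp (QOr a b) c)))
| DQ_EFQ  : forall a, DerQ G (QImp QBot a)
| DQ_AllE : forall a t, DerQ G (QImp (QAll a) (renQ (inst t) a))
| DQ_ExI  : forall a t, DerQ G (QImp (renQ (inst t) a) (QEx a))
| DQ_MP   : forall a b, DerQ G (QImp a b) -> DerQ G a -> DerQ G b
| DQ_Gen  : forall a b, DerQ G (QImp (renQ S b) a) -> DerQ G (QImp b (QAll a))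
| DQ_ExR  : forall a b, DerQ G (QImp a (renQ S b)) -> DerQ G (QImp (QEx a) b)
| DQ_bang : forall p, DerP G p -> DerQ G (QBang p)
| DQ_bq   : forall a, DerQ G (QImp a (QBang (PQuest a)))
| DQ_bimp : forall p q, DerQ G (QImp (QBang (PImp p q)) (QImp (QBang p) (QBang q)))
| DQ_bfalse : DerQ G (QImp (QBang PFalse) QBot).

Inductive cform : Type :=
| CVar   : nat -> list nat -> cform
| CFalse : cform
| CAnd   : cform -> cform -> cform
| COr    : cform -> cform -> cform
| CImp   : cform -> cform -> cform
| CEx    : cform -> cform
| CAll   : cform -> cform.

Fixpoint renC (r : nat -> nat) (p : cform) : cform :=
  match p with
  | CVar i l => CVar i (map r l)
  | CFalse => CFalse
  | CAnd a b => CAnd (renC r a) (renC r b)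
  | COr a b => COr (renC r a) (renC r b)
  | CImp a b => CImp (renC r a) (renC r b)
  | CEx a => CEx (renC (up r) a)
  | CAll a => CAll (renC (up r) a)
  end.

Inductive DerC (G : list cform) : cform -> Prop :=
| DC_hyp  : forall p, In p G -> DerC G p
| DC_K    : forall a b, DerC G (CImp a (CImp b a))
| DC_S    : forall a b c, DerC G (CImp (CImp a (CImp b c)) (CImp (CImp a b) (CImp a c)))
| DC_AndE1 : forall a b, DerC G (CImp (CAnd a b) a)
| DC_AndE2 : forall a b, DerC G (CImp (CAnd a b) b)
| DC_AndI : forall a b, DerC G (CImp a (CImp b (CAnd a b)))
| DC_OrI1 : forall a b, DerC G (CImp a (COr a b))
| DC_OrI2 : forall a b, DerC G (CImp b (COr a b))
| DC_OrE  : forall a b c, DerC G (CImp (CImp a c) (CImp (CImp b c) (CImp (COr a b) c)))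
| DC_EFQ  : forall a, DerC G (CImp CFalse a)
| DC_DNE  : forall a, DerC G (CImp (CImp (CImp a CFalse) CFalse) a)
| DC_AllE : forall a t, DerC G (CImp (CAll a) (renC (inst t) a))
| DC_ExI  : forall a t, DerC G (CImp (renC (inst t) a) (CEx a))
| DC_MP   : forall a b, DerC G (CImp a b) -> DerC G a -> DerC G b
| DC_Gen  : forall a b, DerC G (CImp (renC S b) a) -> DerC G (CImp b (CAll a))
| DC_ExR  : forall a b, DerC G (CImp a (renC S b)) -> DerC G (CImp (CEx a) b).

Fixpoint embC (p : cform) : prop :=
  match p with
  | CVar i l => PVar i l
  | CFalse => PFalse
  | CAnd a b => PAnd (embC a) (embC b)
  | COr a b => POr (embC a) (embC b)
  | CImp a b => PImp (embC a) (embC b)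
  | CEx a => PEx (embC a)
  | CAll a => PAll (embC a)
  end.

Inductive mform : Type :=
| MVar   : nat -> list nat -> mform
| MFalse : mform
| MAnd   : mform -> mform -> mform
| MOr    : mform -> mform -> mform
| MImp   : mform -> mform -> mform
| MEx    : mform -> mform
| MAll   : mform -> mform
| MBox   : mform -> mform.

Fixpoint renM (r : nat -> nat) (p : mform) : mform :=
  match p with
  | MVar i l => MVar i (map r l)
  | MFalse => MFalse
  | MAnd a b => MAnd (renM r a) (renM r b)
  | MOr a b => MOr (renM r a) (renM r b)
  | MImp a b => MImp (renM r a) (renM r b)
  | MEx a => MEx (renM (up r) a)
  | MAll a => MAll (renM (up r) a)
  | MBox a => MBox (renM r a)
  end.

Inductive DerM (G : list mform) : mform -> Prop :=
| DM_hyp  : forall p, In p G -> DerM G p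
| DM_K    : forall a b, DerM G (MImp a (MImp b a))
| DM_S    : forall a b c, DerM G (MImp (MImp a (MImp b c)) (MImp (MImp a b) (MImp a c)))
| DM_AndE1 : forall a b, DerM G (MImp (MAnd a b) a)
| DM_AndE2 : forall a b, DerM G (MImp (MAnd a b) b)
| DM_AndI : forall a b, DerM G (MImp a (MImp b (MAnd a b)))
| DM_OrI1 : forall a b, DerM G (MImp a (MOr a b))
| DM_OrI2 : forall a b, DerM G (MImp b (MOr a b))
| DM_OrE  : forall a b c, DerM G (MImp (MImp a c) (MImp (MImp b c) (MImp (MOr a b) c)))
| DM_EFQ  : forall a, DerM G (MImp MFalse a)
| DM_DNE  : forall a, DerM G (MImp (MImp (MImp a MFalse) MFalse) a)
| DM_AllE : forall a t, DerM G (MImp (MAll a) (renM (inst t) a))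
| DM_ExI  : forall a t, DerM G (MImp (renM (inst t) a) (MEx a))
| DM_MP   : forall a b, DerM G (MImp a b) -> DerM G a -> DerM G b
| DM_Gen  : forall a b, DerM G (MImp (renM S b) a) -> DerM G (MImp b (MAll a))
| DM_ExR  : forall a b, DerM G (MImp a (renM S b)) -> DerM G (MImp (MEx a) b)
| DM_T    : forall a, DerM G (MImp (MBox a) a)
| DM_4    : forall a, DerM G (MImp (MBox a) (MBox (MBox a)))
| DM_Kbox : forall a b, DerM G (MImp (MBox (MImp a b)) (MImp (MBox a) (MBox b)))
| DM_Nec  : forall a, DerM G a -> DerM G (MBox a).

Fixpoint star (p : mform) : prop :=
  match p with
  | MVar i l => PVar i l
  | MFalse => PFalse
  | MAnd a b => PAnd (star a) (star b)
  | MOr a b => POr (star a) (star b)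
  | MImp a b => PImp (star a) (star b)
  | MEx a => PEx (star a)
  | MAll a => PAll (star a)
  | MBox a => PQuest (QBang (star a))
  end.

(* The proof interprets QHC in QS4.  Propositions are translated
   homomorphically with ?α ↦ T(α); problems follow the Gödel–McKinsey–Tarski
   translation: implications and universal quantifiers are boxed, !p ↦ □T(p),
   ⊥ ↦ 0, and problem variables are sent to 0 (any box-stable formula would
   do; the theorem only concerns formulas without problem variables).
   Every problem translates to a "stable" formula x, i.e. ⊢ x → □x, and
   under stable hypotheses the necessitation rule is admissible; this is what
   makes the translated intuitionistic axioms and rules derivable in QS4.
   So derivations in QHC from premises G become QS4-derivations from the
   translated premises (soundness of the translation).

   Part (b) follows because the translation inverts B ↦ B*.  Part (a) follows
   by composing with the erasure of boxes, which maps QS4-derivations to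
   QC-derivations and inverts the embedding of QC into QHC. *)

From Stdlib Require Import List.
Import ListNotations.

(* The iterated implication h1 → (h2 → … → c), used to reason in QS4 under a
   list of local assumptions. *)
Fixpoint imps (H : list mform) (c : mform) : mform :=
  match H with nil => c | h :: H' => MImp h (imps H' c) end.

Definition stable (G : list mform) (x : mform) : Prop :=
  DerM G (MImp x (MBox x)).

Section HilbertQS4.
Variable G : list mform.
Notation D := (DerM G).

Lemma m_refl a : D (MImp a a).
Proof.
  eapply DM_MP; [eapply DM_MP; [apply (DM_S G a (MImp a a) a) | apply DM_K] | apply DM_K].
Qed.

Lemma m_trans a b c : D (MImp a b) -> D (MImp b c) -> D (MImp a c).
Proof.
  intros hab hbc.
  eapply DM_MP; [eapply DM_MP; [apply (DM_S G a b c) |] | exact hab].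
  eapply DM_MP; [apply DM_K | exact hbc].
Qed.

Lemma imps_weaken H c : D c -> D (imps H c).
Proof.
  intro hc; induction H as [|h H IH]; simpl; [exact hc |].
  eapply DM_MP; [apply DM_K | exact IH].
Qed.

Lemma imps_mp H a b : D (imps H (MImp a b)) -> D (imps H a) -> D (imps H b).
Proof.
  assert (dist : D (MImp (imps H (MImp a b)) (MImp (imps H a) (imps H b)))).
  { induction H as [|h H IH]; simpl; [apply m_refl |].
    eapply m_trans; [| apply DM_S].
    eapply DM_MP; [apply (DM_S G h _ (MImp (imps H a) (imps H b))) |].
    eapply DM_MP; [apply DM_K | exact IH]. }
  intros hab ha. exact (DM_MP _ _ _ (DM_MP _ _ _ dist hab) ha).
Qed.

Lemma imps_hyp H a : In a H -> D (imps H a).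
Proof.
  induction H as [|h H IH]; simpl; [intros [] |].
  intros [<- | i].
  - clear IH. induction H as [|h' H IH']; simpl; [apply m_refl |].
    eapply m_trans; [exact IH' | apply DM_K].
  - eapply DM_MP; [apply DM_K | auto].
Qed.

Lemma imps_app1 H x y : D (MImp x y) -> D (imps H x) -> D (imps H y).
Proof. intros t h. exact (imps_mp H x y (imps_weaken H _ t) h). Qed.

Lemma imps_app2 H x y z :
  D (MImp x (MImp y z)) -> D (imps H x) -> D (imps H y) -> D (imps H z).
Proof. intros t h1 h2. exact (imps_mp H y z (imps_mp H x _ (imps_weaken H _ t) h1) h2). Qed.

Lemma box_mono a b : D (MImp a b) -> D (MImp (MBox a) (MBox b)).
Proof. intro h. exact (DM_MP _ _ _ (DM_Kbox _ a b) (DM_Nec _ _ h)). Qed.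

Lemma box_imps H z : D (MImp (MBox (imps H z)) (imps (map MBox H) (MBox z))).
Proof.
  induction H as [|h H IH]; simpl; [apply m_refl |].
  change (D (imps [MBox (MImp h (imps H z)); MBox h] (imps (map MBox H) (MBox z)))).
  apply (imps_app1 _ _ _ IH).
  apply (imps_app2 _ _ _ _ (DM_Kbox G h (imps H z))); apply imps_hyp; simpl; auto.
Qed.

Lemma box_intro H z : Forall (stable G) H -> D (imps H z) -> D (imps H (MBox z)).
Proof.
  intros HS hz.
  assert (unbox : forall c, D (MImp (imps (map MBox H) c) (imps H c))).
  { intro c; clear hz; induction HS as [|h H sh _ IH]; simpl; [apply m_refl |].
    change (D (imps [MImp (MBox h) (imps (map MBox H) c); h] (imps H c))).
    apply (imps_app1 _ _ _ IH).
    eapply imps_mp; [apply imps_hyp; simpl; auto |].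
    apply (imps_app1 _ _ _ sh). apply imps_hyp; simpl; auto. }
  eapply DM_MP; [apply unbox |].
  eapply DM_MP; [apply box_imps | apply DM_Nec; exact hz].
Qed.

Lemma box_elim x y : D (MBox (MImp x y)) -> D (MImp x y).
Proof. intro h. eapply DM_MP; [apply DM_T | exact h]. Qed.

Lemma iff_refl a : D (MAnd (MImp a a) (MImp a a)).
Proof. eapply DM_MP; [eapply DM_MP; [apply DM_AndI | apply m_refl] | apply m_refl]. Qed.

End HilbertQS4.

Lemma renM_cancel x : forall r s, (forall n, r (s n) = n) -> renM r (renM s x) = x.
Proof.
  induction x; intros r s e; simpl; try (f_equal; eauto; fail).
  - f_equal. induction l; simpl; congruence.
  - f_equal. apply IHx. intros [|n]; simpl; congruence.
  - f_equal. apply IHx. intros [|n]; simpl; congruence.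
Qed.

Section Stability.
Variable G : list mform.

Lemma stable_box x : stable G (MBox x).
Proof. apply DM_4. Qed.

Lemma stable_false : stable G MFalse.
Proof. apply DM_EFQ. Qed.

Lemma stable_and x y : stable G x -> stable G y -> stable G (MAnd x y).
Proof.
  intros sx sy.
  change (DerM G (imps [MAnd x y] (MBox (MAnd x y)))).
  eapply imps_app2; [eapply DM_MP; [apply (box_imps G [x; y]) | apply DM_Nec, DM_AndI] | |].
  - apply (imps_app1 _ _ _ _ sx), (imps_app1 _ _ _ _ (DM_AndE1 _ _ y)).
    apply imps_hyp; simpl; auto.
  - apply (imps_app1 _ _ _ _ sy), (imps_app1 _ _ _ _ (DM_AndE2 _ x _)).
    apply imps_hyp; simpl; auto.
Qed.

Lemma stable_or x y : stable G x -> stable G y -> stable G (MOr x y).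
Proof.
  intros sx sy.
  eapply DM_MP; [eapply DM_MP; [apply DM_OrE |] |].
  - eapply m_trans; [exact sx | apply box_mono, DM_OrI1].
  - eapply m_trans; [exact sy | apply box_mono, DM_OrI2].
Qed.

Lemma stable_ex x : stable G x -> stable G (MEx x).
Proof.
  intro sx. apply DM_ExR; simpl.
  eapply m_trans; [exact sx | apply box_mono].
  pose proof (DM_ExI G (renM (up S) x) 0) as h.
  rewrite renM_cancel in h by (intros [|n]; reflexivity). exact h.
Qed.

End Stability.

Fixpoint tP (p : prop) : mform :=
  match p with
  | PVar i l => MVar i l
  | PFalse => MFalse
  | PAnd a b => MAnd (tP a) (tP b)
  | POr a b => MOr (tP a) (tP b)
  | PImp a b => MImp (tP a) (tP b)
  | PEx a => MEx (tP a)
  | PAll a => MAll (tP a)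
  | PQuest a => tQ a
  end
with tQ (a : prob) : mform :=
  match a with
  | QVar _ _ => MFalse
  | QBot => MFalse
  | QAnd x y => MAnd (tQ x) (tQ y)
  | QOr x y => MOr (tQ x) (tQ y)
  | QImp x y => MBox (MImp (tQ x) (tQ y))
  | QEx x => MEx (tQ x)
  | QAll x => MBox (MAll (tQ x))
  | QBang p => MBox (tP p)
  end.

Scheme prop_mut := Induction for prop Sort Prop
  with prob_mut := Induction for prob Sort Prop.
Combined Scheme formula_mut from prop_mut, prob_mut.

Lemma t_ren :
  (forall p r, tP (renP r p) = renM r (tP p)) /\
  (forall a r, tQ (renQ r a) = renM r (tQ a)).
Proof. apply formula_mut; intros; simpl; congruence. Qed.

Lemma tQ_stable G a : stable G (tQ a).
Proof.
  induction a; simpl;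
    auto using stable_box, stable_false, stable_and, stable_or, stable_ex.
Qed.

(* The intuitionistic axioms and rules, in their translated form, are
   derivable in QS4 (for stable translations of the antecedents). *)
Section TranslatedIntuitionisticLogic.
Variable G : list mform.
Notation D := (DerM G).

Lemma gmt_K x y : stable G x -> D (MBox (MImp x (MBox (MImp y x)))).
Proof. intro s. apply DM_Nec, (box_intro G [x]); auto. apply DM_K. Qed.

Lemma gmt_S x y c :
  D (MBox (MImp (MBox (MImp x (MBox (MImp y c))))
                (MBox (MImp (MBox (MImp x y)) (MBox (MImp x c)))))).
Proof.
  apply DM_Nec, (box_intro G [MBox (MImp x (MBox (MImp y c)))]);
    [repeat constructor; apply stable_box |].
  change (D (imps [MBox (MImp x (MBox (MImp y c))); MBox (MImp x y)] (MBox (MImp x c)))).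
  apply box_intro; [repeat constructor; apply stable_box |].
  set (H := [MBox (MImp x (MBox (MImp y c))); MBox (MImp x y); x]).
  assert (hx : D (imps H x)) by (apply imps_hyp; simpl; auto).
  assert (hyc : D (imps H (MImp y c))).
  { eapply imps_app1; [apply DM_T |].
    eapply imps_mp; [eapply imps_app1; [apply DM_T | apply imps_hyp; simpl; auto] | exact hx]. }
  assert (hy : D (imps H y)).
  { eapply imps_mp; [eapply imps_app1; [apply DM_T | apply imps_hyp; simpl; auto] | exact hx]. }
  exact (imps_mp _ _ _ _ hyc hy).
Qed.

Lemma gmt_AndI x y : stable G x -> D (MBox (MImp x (MBox (MImp y (MAnd x y))))).
Proof. intro s. apply DM_Nec, (box_intro G [x]); auto. apply DM_AndI. Qed.

Lemma gmt_OrE x y c :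
  D (MBox (MImp (MBox (MImp x c))
                (MBox (MImp (MBox (MImp y c)) (MBox (MImp (MOr x y) c)))))).
Proof.
  apply DM_Nec, (box_intro G [MBox (MImp x c)]); [repeat constructor; apply stable_box |].
  change (D (imps [MBox (MImp x c); MBox (MImp y c)] (MBox (MImp (MOr x y) c)))).
  apply box_intro; [repeat constructor; apply stable_box |].
  eapply imps_app2; [apply DM_OrE | |];
    (eapply imps_app1; [apply DM_T | apply imps_hyp; simpl; auto]).
Qed.

Lemma gmt_AllE x t : D (MBox (MImp (MBox (MAll x)) (renM (inst t) x))).
Proof. apply DM_Nec. eapply m_trans; [apply DM_T | apply DM_AllE]. Qed.

Lemma gmt_Gen x y :
  stable G y -> D (MBox (MImp (renM S y) x)) -> D (MBox (MImp y (MBox (MAll x)))).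
Proof.
  intros s h. apply DM_Nec, (box_intro G [y]); auto.
  apply DM_Gen, box_elim, h.
Qed.

Lemma gmt_ExR x y : D (MBox (MImp x (renM S y))) -> D (MBox (MImp (MEx x) y)).
Proof. intro h. apply DM_Nec, DM_ExR, box_elim, h. Qed.

Lemma gmt_bang_imp p q :
  D (MBox (MImp (MBox (MImp p q)) (MBox (MImp (MBox p) (MBox q))))).
Proof.
  apply DM_Nec, (box_intro G [MBox (MImp p q)]); [repeat constructor; apply stable_box |].
  apply DM_Kbox.
Qed.

End TranslatedIntuitionisticLogic.

Scheme DerP_mut := Induction for DerP Sort Prop
  with DerQ_mut := Induction for DerQ Sort Prop.

Lemma translation_sound G :
  (forall p, DerP G p -> DerM (map tP G) (tP p)) /\
  (forall a, DerQ G a -> DerM (map tP G) (tQ a)).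
Proof.
  destruct t_ren as [RP RQ].
  set (G' := map tP G).
  assert (stQ : forall a, stable G' (tQ a)) by (intro; apply tQ_stable).
  split;
  [ apply (DerP_mut G (fun p _ => DerM G' (tP p)) (fun a _ => DerM G' (tQ a)))
  | apply (DerQ_mut G (fun p _ => DerM G' (tP p)) (fun a _ => DerM G' (tQ a))) ];
  intros; simpl in *; rewrite ?RP, ?RQ in *.
  (* premises and classical logic: the translation is homomorphic *)
  all: try solve [ apply DM_hyp, in_map; assumption
                 | eapply DM_MP; eassumption
                 | apply DM_Gen; assumption
                 | apply DM_ExR; assumption
                 | constructor ].
  (* the schemas of proposition type: ?!p → p, ?(α→β) → (?α → ?β) and
     ?∀α → ∀?α are instances of □x → x; the others become trivial *)
  all: try solve [ assumption | apply DM_T | apply m_refl | apply iff_refl ].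
  all: try solve [ apply gmt_K, stQ | apply gmt_S | apply gmt_AndI, stQ
                 | apply gmt_OrE | apply gmt_AllE | apply gmt_Gen; auto
                 | apply gmt_ExR; assumption
                 | eapply DM_MP; [apply box_elim |]; eassumption ].
  (* the remaining axioms are necessitations of theorems, and
     α → !?α is stability of the translation of α *)
  all: solve [ apply gmt_bang_imp | apply DM_Nec;
                   solve [ constructor | apply DM_T | apply stQ | assumption ] ].
Qed.

Fixpoint erase (p : mform) : cform :=
  match p with
  | MVar i l => CVar i l
  | MFalse => CFalse
  | MAnd a b => CAnd (erase a) (erase b)
  | MOr a b => COr (erase a) (erase b)
  | MImp a b => CImp (erase a) (erase b)
  | MEx a => CEx (erase a)
  | MAll a => CAll (erase a)
  | MBox a => erase a
  end.

Lemma erase_ren p : forall r, erase (renM r p) = renC r (erase p).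
Proof. induction p; intros; simpl; congruence. Qed.

Lemma c_refl G a : DerC G (CImp a a).
Proof.
  eapply DC_MP; [eapply DC_MP; [apply (DC_S G a (CImp a a) a) | apply DC_K] | apply DC_K].
Qed.

(* Box erasure is sound: the modal postulates become instances of a → a. *)
Lemma erase_sound G a : DerM G a -> DerC (map erase G) (erase a).
Proof.
  induction 1; simpl in *; rewrite ?erase_ren in *;
    solve [ assumption | apply c_refl | apply DC_hyp, in_map; assumption
          | constructor; auto | econstructor; eauto ].
Qed.

Lemma erase_tP_embC p : erase (tP (embC p)) = p.
Proof. induction p; simpl; congruence. Qed.

Lemma tP_star A : tP (star A) = A.
Proof. induction A; simpl; congruence. Qed.

Lemma map_cancel {X Y : Type} (f : Y -> X) (g : X -> Y) (l : list X) :
  (forall x, f (g x) = x) -> map f (map g l) = l.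
Proof. intro e. rewrite map_map, (map_ext _ (fun x => x)), map_id; auto. Qed.

Theorem theorem3p2 :
  (forall (ps : list cform) (p : cform),
      DerP (map embC ps) (embC p) -> DerC ps p)
  /\
  (forall (As : list mform) (A : mform),
      DerP (map star As) (star A) -> DerM As A).
Proof.
  split.
  - intros ps p h.
    apply (proj1 (translation_sound _)), erase_sound in h.
    rewrite erase_tP_embC, map_map, map_cancel in h by apply erase_tP_embC.
    exact h.
  - intros As A h.
    apply (proj1 (translation_sound _)) in h.
    rewrite tP_star, map_cancel in h by apply tP_star.
    exact h.
Qed.
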